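(* For a one-parameter family $\rho(\theta)=\sum_{k=1}^d p_k(\theta)|w_k(\theta)\rangle\langle w_k(\theta)|$ with a chosen smooth spectral decomposition as in the context, equality $H_{SLD}(\theta)=C_L(\theta)$ holds at $\theta$ if and only if $\langle w_j'(\theta)|w_k(\theta)\rangle=0$ for all $j\neq k$ with $p_j(\theta)>0$ and $p_k(\theta)>0$. In particular, if $\rho(\theta)$ is a pure state then $C_L(\theta)=H_{SLD}(\theta)$.
   Context: Let $I\subseteq\mathbb{R}$ be an open interval and $\rho(\theta)=\sum_{k=1}^d p_k(\theta)|w_k(\theta)\rangle\langle w_k(\theta)|$, $\theta\in I$, where $p_1,\dots,p_d:I\to[0,1]$ are smooth with $\sum_k p_k=1$, and $|w_1(\theta)\rangle,\dots,|w_d(\theta)\rangle$ is an orthonormal basis of $\mathbb{C}^d$ depending smoothly on $\theta$. Write $|w_k'\rangle=\frac{d}{d\theta}|w_k(\theta)\rangle$. Convention: in sums $\sum_i \frac{1}{p_i}(\cdot)^2$, indices with $p_i(\theta)=0$ are omitted. The $C_L$ quantum information is $$C_L(\theta)=\sum_i\frac{1}{p_i}\Big(\frac{dp_i}{d\theta}\Big)^2+4\sum_{j<k}(p_j+p_k)|\langle w_j'|w_k\rangle|^2 .$$ The SLD quantum information is $H_{SLD}(\theta)=\mathrm{tr}\{\rho(\theta)\lambda(\theta)^2\}$, where $\lambda(\theta)$ is any Hermitian solution of $\frac{d\rho}{d\theta}=\frac12(\rho\lambda+\lambda\rho)$. *)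

From Stdlib Require Import Reals.
Open Scope R_scope.

Record C : Type := mkC { Re : R; Im : R }.
Definition RtoC (x : R) : C := mkC x 0.
Definition C0 : C := RtoC 0.
Definition Cadd (z w : C) : C := mkC (Re z + Re w) (Im z + Im w).
Definition Cmul (z w : C) : C :=
  mkC (Re z * Re w - Im z * Im w) (Re z * Im w + Im z * Re w).
Definition Cconj (z : C) : C := mkC (Re z) (- Im z).
Definition Cnorm2 (z : C) : R := Re z * Re z + Im z * Im z.

Fixpoint sumR (n : nat) (f : nat -> R) : R :=
  match n with O => 0 | S m => sumR m f + f m end.
Fixpoint sumC (n : nat) (f : nat -> C) : C :=
  match n with O => C0 | S m => Cadd (sumC m f) (f m) end.

(* ---------- vectors in C^d (components with index < d) and matrices ---------- *)
Definition vec := nat -> C.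
Definition mat := nat -> nat -> C.

Definition inner (d : nat) (u v : vec) : C := sumC d (fun i => Cmul (Cconj (u i)) (v i)).

Definition mxmul (d : nat) (A B : mat) : mat :=
  fun i j => sumC d (fun l => Cmul (A i l) (B l j)).
Definition mxtr (d : nat) (A : mat) : C := sumC d (fun i => A i i).
Definition mx_eq (d : nat) (A B : mat) : Prop :=
  forall i j, (i < d)%nat -> (j < d)%nat -> A i j = B i j.
Definition hermitian (d : nat) (A : mat) : Prop :=
  forall i j, (i < d)%nat -> (j < d)%nat -> A i j = Cconj (A j i).

Definition rho (d : nat) (p : nat -> R -> R) (w : nat -> R -> vec) (t : R) : mat :=
  fun i j => sumC d (fun k => Cmul (RtoC (p k t)) (Cmul (w k t i) (Cconj (w k t j)))).

Definition is_open_interval (I : R -> Prop) : Prop :=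
  (exists x, I x) /\
  (forall x y z, I x -> I z -> x <= y <= z -> I y) /\
  (forall x, I x -> exists eps, 0 < eps /\ forall y, Rabs (y - x) < eps -> I y).

Definition smooth_on (I : R -> Prop) (f : R -> R) : Prop :=
  exists D : nat -> R -> R, D O = f /\
    forall n x, I x -> derivable_pt_lim (D n) x (D (S n) x).

Definition smoothC_on (I : R -> Prop) (f : R -> C) : Prop :=
  smooth_on I (fun t => Re (f t)) /\ smooth_on I (fun t => Im (f t)).
Definition derivableC_lim (f : R -> C) (x : R) (l : C) : Prop :=
  derivable_pt_lim (fun t => Re (f t)) x (Re l) /\
  derivable_pt_lim (fun t => Im (f t)) x (Im l).

Definition CL (d : nat) (pt : nat -> R) (dp : nat -> R) (wt dw : nat -> vec) : R :=
  sumR d (fun i => if Req_EM_T (pt i) 0 then 0 else / pt i * (dp i * dp i))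
  + 4 * sumR d (fun k => sumR k (fun j =>
          (pt j + pt k) * Cnorm2 (inner d (dw j) (wt k)))).

Definition HSLD_of (d : nat) (rh lam : mat) : C := mxtr d (mxmul d rh (mxmul d lam lam)).

Definition SLD_eq (d : nat) (rh drho lam : mat) : Prop :=
  forall i j, (i < d)%nat -> (j < d)%nat ->
    drho i j = Cmul (RtoC (/ 2)) (Cadd (mxmul d rh lam i j) (mxmul d lam rh i j)).

Definition pure_state (d : nat) (rh : mat) : Prop := mx_eq d (mxmul d rh rh) rh.

(* Fix theta and write P_k = p_k(theta), W_k = w_k(theta), U_k = w_k'(theta).
   Since the W_k form an orthonormal basis, the whole argument takes place in
   that eigenbasis, with lambda represented by L_jk = <W_j|lambda W_k>:

   - Differentiating <w_j|w_k> = delta_jk gives <W_j|U_k> = -<U_j|W_k>, and the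
     product rule gives rho' = sum_k p_k' |W_k><W_k| + p_k (|U_k><W_k| + |W_k><U_k|).
   - Taking <W_j| . |W_k> of both sides of the SLD equation then yields
        (P_j+P_k)/2 L_jk = delta_jk p_j' + (P_j-P_k) <U_j|W_k>.
   - By the completeness of the basis, H_SLD = tr(rho lambda^2)
     = sum_m P_m sum_n |L_nm|^2.  Substituting the previous identity, the
     diagonal terms give exactly the first sum of C_L, and each pair j < k
     contributes 16 P_j P_k |<U_j|W_k>|^2 / (P_j+P_k) >= 0 to C_L - H_SLD;
     hence equality holds iff <U_j|W_k> = 0 whenever P_j, P_k > 0.
   - For a pure state every P_m is 0 or 1 and they sum to 1, so at most one is
     positive and the orthogonality condition holds vacuously. *)

From Stdlib Require Import Reals Lra Psatz ClassicalEpsilon FunctionalExtensionality.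
From HB Require Import structures.
From mathcomp Require all_boot all_algebra.
Open Scope R_scope.

Local Notation "a <+> b" := (Cadd a b) (at level 50, left associativity).
Local Notation "a <*> b" := (Cmul a b) (at level 40, left associativity).

Definition Copp (z : C) : C := mkC (- Re z) (- Im z).

Lemma C_ext (z w : C) : Re z = Re w -> Im z = Im w -> z = w.
Proof. destruct z, w; simpl; intros; subst; reflexivity. Qed.

Lemma C_ring_theory :
  ring_theory C0 (RtoC 1) Cadd Cmul (fun a b => a <+> Copp b) Copp eq.
Proof. constructor; intros; apply C_ext; simpl; ring. Qed.
Add Ring C_ring : C_ring_theory.

Ltac C_componentwise := apply C_ext; simpl; ring.

Lemma Cconj_mul a b : Cconj (a <*> b) = Cconj a <*> Cconj b.
Proof. C_componentwise. Qed.

Lemma Cconj_involutive a : Cconj (Cconj a) = a.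
Proof. C_componentwise. Qed.

Lemma Cconj_mul_self z : Cconj z <*> z = RtoC (Cnorm2 z).
Proof. unfold Cnorm2. C_componentwise. Qed.

Lemma Cnorm2_nonneg z : 0 <= Cnorm2 z.
Proof. unfold Cnorm2. nra. Qed.

Lemma Cnorm2_eq0 z : Cnorm2 z = 0 <-> z = C0.
Proof.
  unfold Cnorm2. split.
  - intros H. apply C_ext; simpl; nra.
  - intros ->. simpl. ring.
Qed.

Lemma Cnorm2_mul z w : Cnorm2 (z <*> w) = Cnorm2 z * Cnorm2 w.
Proof. unfold Cnorm2. simpl. ring. Qed.

Lemma Cnorm2_RtoC r : Cnorm2 (RtoC r) = r * r.
Proof. unfold Cnorm2. simpl. ring. Qed.

Lemma RtoC_inj x y : RtoC x = RtoC y -> x = y.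
Proof. intros H. exact (f_equal Re H). Qed.

Lemma sumC_ext n f g : (forall i, (i < n)%nat -> f i = g i) -> sumC n f = sumC n g.
Proof.
  induction n; intros H; simpl; auto.
  rewrite IHn by (intros; apply H; lia). rewrite (H n) by lia. reflexivity.
Qed.

Lemma sumC_add n f g : sumC n (fun i => f i <+> g i) = sumC n f <+> sumC n g.
Proof. induction n; simpl. C_componentwise. rewrite IHn. ring. Qed.

Lemma sumC_mul_l n c f : sumC n (fun i => c <*> f i) = c <*> sumC n f.
Proof. induction n; simpl. C_componentwise. rewrite IHn. ring. Qed.

Lemma sumC_mul_r n c f : sumC n (fun i => f i <*> c) = sumC n f <*> c.
Proof. induction n; simpl. C_componentwise. rewrite IHn. ring. Qed.

Lemma sumC_zero n : sumC n (fun _ => C0) = C0.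
Proof. induction n; simpl; auto. rewrite IHn. C_componentwise. Qed.

Lemma sumC_swap n m f :
  sumC n (fun i => sumC m (fun j => f i j)) = sumC m (fun j => sumC n (fun i => f i j)).
Proof.
  induction n; simpl.
  - rewrite sumC_zero. reflexivity.
  - rewrite IHn, <- sumC_add. reflexivity.
Qed.

Lemma sumC_conj n f : Cconj (sumC n f) = sumC n (fun i => Cconj (f i)).
Proof. induction n; simpl. C_componentwise. rewrite <- IHn. C_componentwise. Qed.

Lemma sumC_RtoC n f : sumC n (fun i => RtoC (f i)) = RtoC (sumR n f).
Proof. induction n; simpl. reflexivity. rewrite IHn. C_componentwise. Qed.

Definition kron (j k : nat) : R := if Nat.eq_dec j k then 1 else 0.

Lemma kron_sym j k : kron j k = kron k j.
Proof. unfold kron. destruct (Nat.eq_dec j k), (Nat.eq_dec k j); congruence. Qed.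

Lemma sumC_kron n k f : (k < n)%nat -> sumC n (fun i => RtoC (kron i k) <*> f i) = f k.
Proof.
  induction n; intros Hk; simpl; [lia|].
  unfold kron at 2. destruct (Nat.eq_dec n k) as [<-|Hne].
  - rewrite (sumC_ext n _ (fun _ => C0)), sumC_zero; [C_componentwise|].
    intros i Hi. unfold kron. destruct (Nat.eq_dec i n); [lia|]. C_componentwise.
  - rewrite IHn by lia. C_componentwise.
Qed.

Lemma sumR_ext n f g : (forall i, (i < n)%nat -> f i = g i) -> sumR n f = sumR n g.
Proof.
  induction n; intros H; simpl; auto.
  rewrite IHn by (intros; apply H; lia). rewrite (H n) by lia. reflexivity.
Qed.

Lemma sumR_add n f g : sumR n (fun i => f i + g i) = sumR n f + sumR n g.
Proof. induction n; simpl. ring. rewrite IHn. ring. Qed.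

Lemma sumR_mul_l n c f : sumR n (fun i => c * f i) = c * sumR n f.
Proof. induction n; simpl. ring. rewrite IHn. ring. Qed.

Lemma sumR_nonneg n f : (forall i, (i < n)%nat -> 0 <= f i) -> 0 <= sumR n f.
Proof.
  induction n; intros H; simpl; [lra|].
  assert (0 <= f n) by (apply H; lia).
  assert (0 <= sumR n f) by (apply IHn; intros; apply H; lia). lra.
Qed.

Lemma sumR_eq0_iff n f : (forall i, (i < n)%nat -> 0 <= f i) ->
  (sumR n f = 0 <-> forall i, (i < n)%nat -> f i = 0).
Proof.
  induction n; intros H; simpl; [split; intros; [lia|reflexivity]|].
  assert (0 <= f n) by (apply H; lia).
  assert (0 <= sumR n f) by (apply sumR_nonneg; intros; apply H; lia).
  assert (IH := IHn (fun i Hi => H i ltac:(lia))).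
  split.
  - intros E i Hi. destruct (Nat.eq_dec i n) as [->|]; [lra|].
    apply IH; [lra|lia].
  - intros E. rewrite (proj2 IH), E by (auto || intros; apply E; lia). ring.
Qed.

Lemma sumR_ge_pair n f j k : (forall i, (i < n)%nat -> 0 <= f i) ->
  (j < n)%nat -> (k < n)%nat -> j <> k -> f j + f k <= sumR n f.
Proof.
  induction n; intros H Hj Hk Hne; simpl; [lia|].
  assert (Hsingle : forall i, (i < n)%nat -> f i <= sumR n f).
  { intros i Hi. clear IHn Hj Hk Hne. induction n; simpl; [lia|].
    assert (0 <= f n) by (apply H; lia).
    assert (0 <= sumR n f) by (apply sumR_nonneg; intros; apply H; lia).
    destruct (Nat.eq_dec i n) as [->|]; [lra|].
    assert (f i <= sumR n f) by (apply IHn; [intros; apply H|]; lia). lra. }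
  assert (0 <= f n) by (apply H; lia).
  destruct (Nat.eq_dec j n) as [->|]; [specialize (Hsingle k ltac:(lia)); lra|].
  destruct (Nat.eq_dec k n) as [->|]; [specialize (Hsingle j ltac:(lia)); lra|].
  assert (f j + f k <= sumR n f) by (apply IHn; [intros; apply H|..]; lia || auto).
  lra.
Qed.

Lemma sumR_square_split n f : sumR n (fun m => sumR n (fun k => f k m)) =
  sumR n (fun m => f m m) + sumR n (fun k => sumR k (fun j => f j k + f k j)).
Proof. induction n; simpl. ring. rewrite !sumR_add, IHn. ring. Qed.

Lemma sumR_pairs_eq0_iff n g : (forall j k, (j < k)%nat -> (k < n)%nat -> 0 <= g j k) ->
  (sumR n (fun k => sumR k (fun j => g j k)) = 0 <->
   forall j k, (j < k)%nat -> (k < n)%nat -> g j k = 0).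
Proof.
  intros Hg. rewrite sumR_eq0_iff.
  - split.
    + intros H j k Hjk Hk. apply (proj1 (sumR_eq0_iff k _ (fun i Hi => Hg i k Hi Hk)));
        [apply H|]; auto.
    + intros H k Hk. apply sumR_eq0_iff; [intros; apply Hg; auto|].
      intros; apply H; auto.
  - intros k Hk. apply sumR_nonneg. intros; apply Hg; auto.
Qed.

(* Vectors and matrices of C^d.  [mv d M y] is the vector M y, and
   [dyads d c Y Z] is the matrix sum_m c_m |Y_m><Z_m|, so that
   [rho d p w t] is [dyads] applied to the spectral data at t. *)
Definition mv (d : nat) (M : mat) (y : vec) : vec :=
  fun a => sumC d (fun b => M a b <*> y b).

Definition dyads (d : nat) (c : nat -> C) (Y Z : nat -> vec) : mat :=
  fun a b => sumC d (fun m => c m <*> (Y m a <*> Cconj (Z m b))).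

Definition ONB (d : nat) (W : nat -> vec) : Prop :=
  forall j k, (j < d)%nat -> (k < d)%nat -> inner d (W j) (W k) = RtoC (kron j k).

Lemma inner_conj d x y : inner d x y = Cconj (inner d y x).
Proof. unfold inner. rewrite sumC_conj. apply sumC_ext. intros. C_componentwise. Qed.

Lemma inner_ext_r d x y y' : (forall a, (a < d)%nat -> y a = y' a) ->
  inner d x y = inner d x y'.
Proof. intros H. unfold inner. apply sumC_ext. intros a Ha. rewrite H by exact Ha. reflexivity. Qed.

Lemma inner_add_r d x y z : inner d x (fun a => y a <+> z a) = inner d x y <+> inner d x z.
Proof. unfold inner. rewrite <- sumC_add. apply sumC_ext. intros. ring. Qed.

Lemma inner_scal_r d x c y : inner d x (fun a => c <*> y a) = c <*> inner d x y.
Proof. unfold inner. rewrite <- sumC_mul_l. apply sumC_ext. intros. ring. Qed.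

Lemma inner_mv_ext d x M M' y :
  (forall a b, (a < d)%nat -> (b < d)%nat -> M a b = M' a b) ->
  inner d x (mv d M y) = inner d x (mv d M' y).
Proof.
  intros H. apply inner_ext_r. intros a Ha. unfold mv.
  apply sumC_ext. intros b Hb. rewrite H by assumption. reflexivity.
Qed.

Lemma mv_add d A B y : mv d (fun a b => A a b <+> B a b) y = fun a => mv d A y a <+> mv d B y a.
Proof.
  apply functional_extensionality. intros a. unfold mv. rewrite <- sumC_add.
  apply sumC_ext. intros. ring.
Qed.

Lemma mv_scal d c A y : mv d (fun a b => c <*> A a b) y = fun a => c <*> mv d A y a.
Proof.
  apply functional_extensionality. intros a. unfold mv. rewrite <- sumC_mul_l.
  apply sumC_ext. intros. ring.
Qed.

Lemma mv_scal_vec d A c y : mv d A (fun b => c <*> y b) = fun a => c <*> mv d A y a.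
Proof.
  apply functional_extensionality. intros a. unfold mv. rewrite <- sumC_mul_l.
  apply sumC_ext. intros. ring.
Qed.

Lemma mv_mxmul d A B y : mv d (mxmul d A B) y = mv d A (mv d B y).
Proof.
  apply functional_extensionality. intros a. unfold mv, mxmul.
  transitivity (sumC d (fun b => sumC d (fun l => A a l <*> (B l b <*> y b)))).
  - apply sumC_ext. intros. rewrite <- sumC_mul_r. apply sumC_ext. intros. ring.
  - rewrite sumC_swap. apply sumC_ext. intros. rewrite <- sumC_mul_l. reflexivity.
Qed.

Lemma hermitian_adjoint d M x y : hermitian d M -> inner d x (mv d M y) = inner d (mv d M x) y.
Proof.
  intros HM. unfold inner, mv.
  transitivity (sumC d (fun a => sumC d (fun b => Cconj (x a) <*> M a b <*> y b))).
  - apply sumC_ext. intros. rewrite <- sumC_mul_l. apply sumC_ext. intros. ring.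
  - rewrite sumC_swap. apply sumC_ext. intros b Hb.
    rewrite sumC_conj, <- sumC_mul_r. apply sumC_ext. intros a Ha.
    rewrite (HM a b), Cconj_mul by assumption. ring.
Qed.

Lemma inner_dyads d x c Y Z t :
  inner d x (mv d (dyads d c Y Z) t) =
  sumC d (fun m => c m <*> inner d x (Y m) <*> inner d (Z m) t).
Proof.
  unfold inner, mv, dyads.
  transitivity (sumC d (fun a => sumC d (fun m => sumC d (fun b =>
      c m <*> (Cconj (x a) <*> Y m a) <*> (Cconj (Z m b) <*> t b))))).
  - apply sumC_ext. intros a Ha. rewrite <- sumC_mul_l.
    transitivity (sumC d (fun b => sumC d (fun m =>
      c m <*> (Cconj (x a) <*> Y m a) <*> (Cconj (Z m b) <*> t b)))).
    + apply sumC_ext. intros. rewrite <- sumC_mul_r, <- sumC_mul_l.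
      apply sumC_ext. intros. ring.
    + apply sumC_swap.
  - rewrite sumC_swap. apply sumC_ext. intros m Hm. symmetry.
    rewrite <- sumC_mul_l, sumC_swap. apply sumC_ext. intros b Hb.
    rewrite <- sumC_mul_l, <- sumC_mul_r. apply sumC_ext. intros. ring.
Qed.

Lemma trace_dyads d c Y Z B :
  mxtr d (mxmul d (dyads d c Y Z) B) = sumC d (fun m => c m <*> inner d (Z m) (mv d B (Y m))).
Proof.
  unfold mxtr, mxmul, dyads, inner, mv.
  transitivity (sumC d (fun i => sumC d (fun m => sumC d (fun l =>
      c m <*> (Cconj (Z m l) <*> (B l i <*> Y m i)))))).
  - apply sumC_ext. intros. rewrite sumC_swap. apply sumC_ext. intros.
    rewrite <- sumC_mul_r. apply sumC_ext. intros. ring.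
  - rewrite sumC_swap. apply sumC_ext. intros. rewrite <- sumC_mul_l.
    rewrite sumC_swap. apply sumC_ext. intros. rewrite <- !sumC_mul_l. reflexivity.
Qed.

Section OrthonormalBasis.
Variables (d : nat) (W : nat -> vec).
Hypothesis HW : ONB d W.

Lemma sum_onb_l c g j : (j < d)%nat ->
  sumC d (fun m => c m <*> inner d (W j) (W m) <*> g m) = c j <*> g j.
Proof.
  intros Hj. rewrite <- (sumC_kron d j (fun m => c m <*> g m)) by exact Hj.
  apply sumC_ext. intros m Hm. rewrite HW, kron_sym by assumption. ring.
Qed.

Lemma sum_onb_r c g k : (k < d)%nat ->
  sumC d (fun m => c m <*> g m <*> inner d (W m) (W k)) = c k <*> g k.
Proof.
  intros Hk. rewrite <- (sumC_kron d k (fun m => c m <*> g m)) by exact Hk.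
  apply sumC_ext. intros m Hm. rewrite HW by assumption. ring.
Qed.

Lemma dyads_eigenvector c k : (k < d)%nat ->
  mv d (dyads d c W W) (W k) = fun a => c k <*> W k a.
Proof.
  intros Hk. apply functional_extensionality. intros a. unfold mv, dyads.
  transitivity (sumC d (fun m => c m <*> W m a <*> inner d (W m) (W k))).
  - unfold inner. transitivity (sumC d (fun b => sumC d (fun m =>
        c m <*> W m a <*> (Cconj (W m b) <*> W k b)))).
    + apply sumC_ext. intros. rewrite <- sumC_mul_r. apply sumC_ext. intros. ring.
    + rewrite sumC_swap. apply sumC_ext. intros. rewrite <- sumC_mul_l. reflexivity.
  - exact (sum_onb_r c (fun m => W m a) k Hk).
Qed.

End OrthonormalBasis.

(* Completeness of an orthonormal family of d vectors of C^d,
   sum_n |W_n><W_n| = 1.  This is the finite-dimensional fact that a left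
   inverse of a square matrix is a right inverse; to use MathComp's matrix
   theory, [C] is equipped (locally) with its field structure. *)
Module Completeness.
Import all_boot all_algebra GRing.Theory.

Definition Ceqb (z w : C) : bool :=
  if Req_EM_T (Re z) (Re w) then (if Req_EM_T (Im z) (Im w) then true else false) else false.

Lemma CeqP : Equality.axiom Ceqb.
Proof.
move=> [a b] [c e]; rewrite /Ceqb /=.
case: (Req_EM_T a c) => ha; last by constructor; case.
case: (Req_EM_T b e) => hb; last by constructor; case.
by constructor; rewrite ha hb.
Qed.
HB.instance Definition _ := hasDecEq.Build C CeqP.

Definition Cfind (P : pred C) (n : nat) : option C :=
  match excluded_middle_informative (exists x, P x) with
  | left H => Some (proj1_sig (constructive_indefinite_description _ H))
  | right _ => None end.

Lemma Cfind_correct P n x : Cfind P n = Some x -> P x.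
Proof.
rewrite /Cfind; case: excluded_middle_informative => // H [<-].
exact: (proj2_sig (constructive_indefinite_description _ H)).
Qed.

Lemma Cfind_complete (P : pred C) : (exists x, P x) -> exists n, Cfind P n.
Proof. by move=> H; exists 0%N; rewrite /Cfind; case: excluded_middle_informative. Qed.

Lemma Cfind_ext (P Q : pred C) : P =1 Q -> Cfind P =1 Cfind Q.
Proof. by move=> /functional_extensionality ->. Qed.
HB.instance Definition _ := hasChoice.Build C Cfind_correct Cfind_complete Cfind_ext.

Lemma CaddA : associative Cadd.
Proof. by move=> *; apply: C_ext => /=; ring. Qed.
Lemma CaddC : commutative Cadd.
Proof. by move=> *; apply: C_ext => /=; ring. Qed.
Lemma Cadd0 : left_id C0 Cadd.
Proof. by move=> *; apply: C_ext => /=; ring. Qed.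
Lemma CaddN : left_inverse C0 Copp Cadd.
Proof. by move=> *; apply: C_ext => /=; ring. Qed.
HB.instance Definition _ := GRing.isZmodule.Build C CaddA CaddC Cadd0 CaddN.

Lemma CmulA : associative Cmul.
Proof. by move=> *; apply: C_ext => /=; ring. Qed.
Lemma CmulC : commutative Cmul.
Proof. by move=> *; apply: C_ext => /=; ring. Qed.
Lemma Cmul1 : left_id (RtoC 1) Cmul.
Proof. by move=> *; apply: C_ext => /=; ring. Qed.
Lemma CmulDl : left_distributive Cmul Cadd.
Proof. by move=> *; apply: C_ext => /=; ring. Qed.
Lemma C1_neq0 : RtoC 1 != C0.
Proof. by apply/eqP => /RtoC_inj; exact: R1_neq_R0. Qed.
HB.instance Definition _ :=
  GRing.Zmodule_isComNzRing.Build C CmulA CmulC Cmul1 CmulDl C1_neq0.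

Definition Cinv (z : C) : C := mkC (Re z / Cnorm2 z) (- Im z / Cnorm2 z).

Lemma CmulV (z : C) : z != C0 -> Cmul (Cinv z) z = RtoC 1.
Proof.
move=> /eqP hz; have hn : Cnorm2 z <> 0 by move/Cnorm2_eq0.
by apply: C_ext; rewrite /= /Cnorm2 in hn *; field.
Qed.

Lemma Cinv0 : Cinv C0 = C0.
Proof. by apply: C_ext; rewrite /= /Rdiv; ring. Qed.
HB.instance Definition _ := GRing.ComNzRing_isField.Build C CmulV Cinv0.

Local Open Scope ring_scope.

Lemma big_sumC n (F : nat -> C) : \sum_(i < n) F i = sumC n F.
Proof. by elim: n => [|n IH]; rewrite ?big_ord0 // big_ord_recr /= IH. Qed.

Lemma kron_ord d (i j : 'I_d) : RtoC (kron i j) = (i == j)%:R.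
Proof.
rewrite /kron; case: Nat.eq_dec => [/val_inj -> | ne]; first by rewrite eqxx.
by case: eqP => // e; case: ne; rewrite e.
Qed.

Lemma onb_complete d W : ONB d W ->
  forall a b, (a < d)%coq_nat -> (b < d)%coq_nat ->
  sumC d (fun n => Cmul (W n a) (Cconj (W n b))) = RtoC (kron a b).
Proof.
move=> HW a b /ltP ha /ltP hb.
pose Wadj : 'M[C]_d := \matrix_(j, i) Cconj (W j i).
pose Wmx : 'M[C]_d := \matrix_(i, k) W k i.
have Wunitary : Wadj *m Wmx = 1%:M.
  apply/matrixP => j k; rewrite !mxE -kron_ord -HW; try exact/ltP.
  by rewrite /inner -big_sumC; apply: eq_bigr => i _; rewrite !mxE.
move/mulmx1C/matrixP: Wunitary => /(_ (Ordinal ha) (Ordinal hb)).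
rewrite !mxE -(kron_ord _ (Ordinal ha) (Ordinal hb)) => <-.
by rewrite -big_sumC; apply: eq_bigr => n _; rewrite !mxE.
Qed.
End Completeness.

Section Resolution.
Variables (d : nat) (W : nat -> vec).
Hypothesis HW : ONB d W.

Lemma inner_resolution x y : inner d x y = sumC d (fun n => inner d x (W n) <*> inner d (W n) y).
Proof.
  unfold inner.
  transitivity (sumC d (fun a => sumC d (fun b =>
      RtoC (kron b a) <*> (Cconj (x a) <*> y b)))).
  - apply sumC_ext. intros a Ha. rewrite sumC_kron by exact Ha. reflexivity.
  - transitivity (sumC d (fun a => sumC d (fun b => sumC d (fun n =>
        Cconj (x a) <*> W n a <*> (Cconj (W n b) <*> y b))))).
    + apply sumC_ext. intros a Ha. apply sumC_ext. intros b Hb.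
      rewrite kron_sym, <- (Completeness.onb_complete d W HW a b Ha Hb), <- sumC_mul_r.
      apply sumC_ext. intros. ring.
    + transitivity (sumC d (fun a => sumC d (fun n => sumC d (fun b =>
          Cconj (x a) <*> W n a <*> (Cconj (W n b) <*> y b))))).
      * apply sumC_ext. intros. apply sumC_swap.
      * rewrite sumC_swap. apply sumC_ext. intros n Hn. symmetry.
        rewrite <- sumC_mul_r. apply sumC_ext. intros. rewrite <- sumC_mul_l. reflexivity.
Qed.

(* For Hermitian M: <W_m|M^2 W_m> = ||M W_m||^2 = sum_n |<W_n|M W_m>|^2. *)
Lemma hermitian_square_elt M m : hermitian d M ->
  inner d (W m) (mv d M (mv d M (W m))) =
  RtoC (sumR d (fun n => Cnorm2 (inner d (W n) (mv d M (W m))))).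
Proof.
  intros HM. rewrite hermitian_adjoint, inner_resolution, <- sumC_RtoC by exact HM.
  apply sumC_ext. intros n Hn. rewrite inner_conj, Cconj_mul_self. reflexivity.
Qed.

End Resolution.

Lemma derivable_pt_lim_eq f x l l' : derivable_pt_lim f x l -> l = l' -> derivable_pt_lim f x l'.
Proof. intros H <-. exact H. Qed.

Lemma dC_eq f x a b : derivableC_lim f x a -> a = b -> derivableC_lim f x b.
Proof. intros H <-. exact H. Qed.

Lemma dC_unique f x a b : derivableC_lim f x a -> derivableC_lim f x b -> a = b.
Proof.
  intros [h1 h2] [h3 h4]. apply C_ext.
  - exact (uniqueness_limite _ _ _ _ h1 h3).
  - exact (uniqueness_limite _ _ _ _ h2 h4).
Qed.

Lemma dC_locally_ext f g x lo hi l : lo < x < hi -> (forall z, lo < z < hi -> f z = g z) ->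
  derivableC_lim f x l -> derivableC_lim g x l.
Proof.
  intros Hx Hfg [h1 h2]. split.
  - apply (derivable_pt_lim_locally_ext (fun t => Re (f t)) _ _ _ _ _ Hx); [|exact h1].
    intros z Hz. rewrite Hfg by exact Hz. reflexivity.
  - apply (derivable_pt_lim_locally_ext (fun t => Im (f t)) _ _ _ _ _ Hx); [|exact h2].
    intros z Hz. rewrite Hfg by exact Hz. reflexivity.
Qed.

Lemma dC_const c x : derivableC_lim (fun _ => c) x C0.
Proof. split; apply derivable_pt_lim_const. Qed.

Lemma dC_real f x l : derivable_pt_lim f x l -> derivableC_lim (fun t => RtoC (f t)) x (RtoC l).
Proof. intros h. split; simpl; [exact h | apply derivable_pt_lim_const]. Qed.

Lemma dC_add f g x a b : derivableC_lim f x a -> derivableC_lim g x b ->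
  derivableC_lim (fun t => f t <+> g t) x (a <+> b).
Proof. intros [h1 h2] [h3 h4]. split; apply derivable_pt_lim_plus; assumption. Qed.

Lemma dC_mul f g x a b : derivableC_lim f x a -> derivableC_lim g x b ->
  derivableC_lim (fun t => f t <*> g t) x (a <*> g x <+> f x <*> b).
Proof.
  intros [h1 h2] [h3 h4]. split; simpl.
  - eapply derivable_pt_lim_eq.
    + exact (derivable_pt_lim_minus _ _ _ _ _
        (derivable_pt_lim_mult _ _ _ _ _ h1 h3) (derivable_pt_lim_mult _ _ _ _ _ h2 h4)).
    + simpl. ring.
  - eapply derivable_pt_lim_eq.
    + exact (derivable_pt_lim_plus _ _ _ _ _
        (derivable_pt_lim_mult _ _ _ _ _ h1 h4) (derivable_pt_lim_mult _ _ _ _ _ h2 h3)).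
    + simpl. ring.
Qed.

Lemma dC_conj f x a : derivableC_lim f x a -> derivableC_lim (fun t => Cconj (f t)) x (Cconj a).
Proof. intros [h1 h2]. split; simpl; [exact h1 | exact (derivable_pt_lim_opp _ _ _ h2)]. Qed.

Lemma dC_sum n f a x : (forall k, (k < n)%nat -> derivableC_lim (f k) x (a k)) ->
  derivableC_lim (fun t => sumC n (fun k => f k t)) x (sumC n a).
Proof.
  induction n; intros H; simpl.
  - apply dC_const.
  - apply dC_add; [apply IHn; intros; apply H | apply H]; lia.
Qed.

Lemma dC_inner d f g x f' g' :
  (forall i, (i < d)%nat -> derivableC_lim (fun t => f t i) x (f' i)) ->
  (forall i, (i < d)%nat -> derivableC_lim (fun t => g t i) x (g' i)) ->
  derivableC_lim (fun t => inner d (f t) (g t)) x (inner d f' (g x) <+> inner d (f x) g').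
Proof.
  intros Hf Hg. unfold inner. rewrite <- sumC_add. apply dC_sum. intros i Hi.
  apply (dC_mul (fun t => Cconj (f t i)) (fun t => g t i)); [apply dC_conj|]; auto.
Qed.

Lemma dC_dyads d c Y Z x c' Y' Z' a b :
  (forall m, (m < d)%nat -> derivableC_lim (fun t => c t m) x (c' m)) ->
  (forall m, (m < d)%nat -> derivableC_lim (fun t => Y t m a) x (Y' m a)) ->
  (forall m, (m < d)%nat -> derivableC_lim (fun t => Z t m b) x (Z' m b)) ->
  derivableC_lim (fun t => dyads d (c t) (Y t) (Z t) a b) x
    (dyads d c' (Y x) (Z x) a b <+> dyads d (c x) Y' (Z x) a b <+> dyads d (c x) (Y x) Z' a b).
Proof.
  intros Hc HY HZ. unfold dyads. rewrite <- !sumC_add. apply dC_sum. intros m Hm.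
  eapply dC_eq.
  - apply dC_mul; [apply Hc; exact Hm|].
    apply (dC_mul (fun t => Y t m a) (fun t => Cconj (Z t m b))); [|apply dC_conj]; auto.
  - cbv beta. ring.
Qed.

(* Differentiating <w_j(t)|w_k(t)> = delta_jk at an interior point shows that
   the matrix (<w_j'|w_k>) is anti-Hermitian. *)
Lemma orthonormal_derivative d Iv (w : nat -> R -> vec) theta (dw : nat -> vec) j k :
  is_open_interval Iv ->
  (forall t, Iv t -> ONB d (fun m => w m t)) -> Iv theta ->
  (forall m i, (m < d)%nat -> (i < d)%nat -> derivableC_lim (fun t => w m t i) theta (dw m i)) ->
  (j < d)%nat -> (k < d)%nat ->
  inner d (dw j) (w k theta) <+> inner d (w j theta) (dw k) = C0.
Proof.
  intros [_ [_ Hopen]] Hon Hth Hdw Hj Hk.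
  destruct (Hopen theta Hth) as [eps [Heps Hball]].
  apply (dC_unique (fun t => inner d (w j t) (w k t)) theta).
  - apply dC_inner; intros; apply Hdw; assumption.
  - apply (dC_locally_ext (fun _ => RtoC (kron j k)) _ _ (theta - eps) (theta + eps));
      [lra| |apply dC_const].
    intros z Hz. symmetry. apply Hon; [apply Hball; apply Rabs_def1|..]; lra || assumption.
Qed.

Lemma rho_derivative d p w theta dp dw a b :
  (forall k, (k < d)%nat -> derivable_pt_lim (p k) theta (dp k)) ->
  (forall k i, (k < d)%nat -> (i < d)%nat -> derivableC_lim (fun t => w k t i) theta (dw k i)) ->
  (a < d)%nat -> (b < d)%nat ->
  derivableC_lim (fun t => rho d p w t a b) theta
    (dyads d (fun k => RtoC (dp k)) (fun k => w k theta) (fun k => w k theta) a b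
     <+> dyads d (fun k => RtoC (p k theta)) dw (fun k => w k theta) a b
     <+> dyads d (fun k => RtoC (p k theta)) (fun k => w k theta) dw a b).
Proof.
  intros Hdp Hdw Ha Hb.
  apply (dC_dyads d (fun t k => RtoC (p k t)) (fun t k => w k t) (fun t k => w k t));
    intros; [apply dC_real, Hdp | apply Hdw | apply Hdw]; assumption.
Qed.

(* If the SLD weights C_jk, C_kj of the pair satisfy
   ((p_j+p_k)/2)^2 C = (p_j-p_k)^2 N, then the excess of the C_L term
   4 (p_j+p_k) N over the H_SLD term p_k C_jk + p_j C_kj equals
   16 p_j p_k N / (p_j+p_k): it is nonnegative, and zero iff p_j p_k N = 0. *)
Lemma pair_excess pj pk N Cjk Ckj :
  0 <= pj -> 0 <= pk -> 0 <= N ->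
  ((pj + pk) / 2) * ((pj + pk) / 2) * Cjk = (pj - pk) * (pj - pk) * N ->
  ((pk + pj) / 2) * ((pk + pj) / 2) * Ckj = (pk - pj) * (pk - pj) * N ->
  0 <= 4 * ((pj + pk) * N) - (pk * Cjk + pj * Ckj) /\
  (4 * ((pj + pk) * N) - (pk * Cjk + pj * Ckj) = 0 <-> (0 < pj -> 0 < pk -> N = 0)).
Proof.
  intros Hj Hk HN Ejk Ekj.
  destruct (Req_dec (pj + pk) 0) as [Hs|Hs].
  { assert (pj = 0) by lra. assert (pk = 0) by lra. subst.
    split; [lra | split; intros; lra]. }
  assert (Cjk_val : Cjk = 4 * ((pj - pk) * (pj - pk) * N) / ((pj + pk) * (pj + pk))).
  { apply (Rmult_eq_reg_l (((pj + pk) / 2) * ((pj + pk) / 2))); [|nra].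
    rewrite Ejk. field. exact Hs. }
  assert (Ckj_val : Ckj = 4 * ((pj - pk) * (pj - pk) * N) / ((pj + pk) * (pj + pk))).
  { apply (Rmult_eq_reg_l (((pk + pj) / 2) * ((pk + pj) / 2))); [|nra].
    rewrite Ekj. field. exact Hs. }
  assert (Excess : 4 * ((pj + pk) * N) - (pk * Cjk + pj * Ckj) = 16 * (pj * pk * N) / (pj + pk)).
  { rewrite Cjk_val, Ckj_val. field. exact Hs. }
  rewrite Excess. assert (Hpos : 0 < pj + pk) by lra.
  assert (Hinv : 0 < / (pj + pk)) by (apply Rinv_0_lt_compat; exact Hpos).
  assert (0 <= pj * pk * N) by (apply Rmult_le_pos; [apply Rmult_le_pos|]; assumption).
  unfold Rdiv. split; [apply Rmult_le_pos; lra | split].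
  - intros E Hpj Hpk. assert (0 < pj * pk) by (apply Rmult_lt_0_compat; assumption).
    apply Rmult_integral in E as [E|E]; [|lra].
    apply Rmult_integral in E as [E|E]; [lra|].
    apply Rmult_integral in E as [E|E]; [lra|exact E].
  - intros Horth. destruct (Req_dec pj 0) as [->|]; [ring|].
    destruct (Req_dec pk 0) as [->|]; [ring|].
    rewrite Horth by lra. ring.
Qed.

(* The comparison behind H_SLD <= C_L, in terms of eigenvalues P, their
   derivatives dP, the weights Cf n m = |<W_n|lambda W_m>|^2 and the symmetric
   quantities N j k = |<W_j'|W_k>|^2: under the relations the SLD equation imposes
   on Cf, the two sums agree iff N j k = 0 for all distinct j, k with P j, P k > 0. *)
Lemma sld_weights_cl_iff d P dP N Cf :
  (forall k, (k < d)%nat -> 0 <= P k) ->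
  (forall j k, (j < d)%nat -> (k < d)%nat -> 0 <= N j k) ->
  (forall j k, (j < d)%nat -> (k < d)%nat -> N k j = N j k) ->
  (forall m, (m < d)%nat -> P m * P m * Cf m m = dP m * dP m) ->
  (forall j k, (j < d)%nat -> (k < d)%nat -> j <> k ->
     ((P j + P k) / 2) * ((P j + P k) / 2) * Cf j k = (P j - P k) * (P j - P k) * N j k) ->
  (sumR d (fun m => P m * sumR d (fun n => Cf n m)) =
     sumR d (fun i => if Req_EM_T (P i) 0 then 0 else / P i * (dP i * dP i))
     + 4 * sumR d (fun k => sumR k (fun j => (P j + P k) * N j k))
   <-> forall j k, (j < d)%nat -> (k < d)%nat -> j <> k -> 0 < P j -> 0 < P k -> N j k = 0).
Proof.
  intros HP HN Hsym Hdiag Hoff.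
  set (excess := fun j k => 4 * ((P j + P k) * N j k) - (P k * Cf j k + P j * Cf k j)).
  assert (Hpair : forall j k, (j < k)%nat -> (k < d)%nat -> 0 <= excess j k /\
     (excess j k = 0 <-> (0 < P j -> 0 < P k -> N j k = 0))).
  { intros j k Hjk Hk. apply pair_excess; try apply HP; try apply HN; try lia.
    - apply Hoff; lia.
    - rewrite <- (Hsym j k) by lia. apply Hoff; lia. }
  assert (Hpairs : 4 * sumR d (fun k => sumR k (fun j => (P j + P k) * N j k)) =
     sumR d (fun k => sumR k (fun j => P k * Cf j k + P j * Cf k j))
     + sumR d (fun k => sumR k (fun j => excess j k))).
  { rewrite <- sumR_add, <- sumR_mul_l. apply sumR_ext. intros k Hk.
    rewrite <- sumR_add, <- sumR_mul_l. apply sumR_ext. intros. unfold excess. ring. }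
  assert (Hdiag_terms : sumR d (fun m => P m * Cf m m) =
     sumR d (fun i => if Req_EM_T (P i) 0 then 0 else / P i * (dP i * dP i))).
  { apply sumR_ext. intros i Hi. destruct (Req_EM_T (P i) 0) as [->|Hne]; [ring|].
    apply (Rmult_eq_reg_l (P i)); [|exact Hne].
    rewrite <- Hdiag by exact Hi. field. exact Hne. }
  rewrite (sumR_ext d _ (fun m => sumR d (fun n => P m * Cf n m)))
    by (intros; symmetry; apply sumR_mul_l).
  rewrite sumR_square_split, Hdiag_terms, Hpairs.
  assert (Hexcess : sumR d (fun k => sumR k (fun j => excess j k)) = 0 <->
     forall j k, (j < k)%nat -> (k < d)%nat -> excess j k = 0)
    by (apply sumR_pairs_eq0_iff; intros; apply Hpair; assumption).
  split.
  - intros E j k Hj Hk Hjk Hpj Hpk.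
    assert (Hall : sumR d (fun k => sumR k (fun j => excess j k)) = 0) by lra.
    destruct (Nat.lt_ge_cases j k) as [Hlt|Hge].
    + apply (proj1 (proj2 (Hpair j k Hlt Hk))); [apply Hexcess|..]; assumption.
    + rewrite <- Hsym by assumption.
      apply (proj1 (proj2 (Hpair k j ltac:(lia) Hj)));
        [apply Hexcess; assumption || lia|..]; assumption.
  - intros Horth.
    assert (Hall : sumR d (fun k => sumR k (fun j => excess j k)) = 0).
    { apply Hexcess. intros j k Hjk Hk. apply (proj2 (proj2 (Hpair j k Hjk Hk))).
      intros; apply Horth; assumption || lia. }
    lra.
Qed.

(* The SLD equation at a fixed parameter value, written in the eigenbasis W of
   rho = sum_k P_k |W_k><W_k|, with U_k playing the role of W_k' and drho that
   of rho', whose product-rule expression is assumed through [Hdrho]. *)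
Section SLDInEigenbasis.
Variables (d : nat) (P dP : nat -> R) (W U : nat -> vec) (lam drho : mat).
Hypothesis HW : ONB d W.
Hypothesis Hherm : hermitian d lam.
Hypothesis Hanti : forall j k, (j < d)%nat -> (k < d)%nat ->
  inner d (U j) (W k) <+> inner d (W j) (U k) = C0.
Hypothesis Hdrho : forall a b, (a < d)%nat -> (b < d)%nat ->
  drho a b = dyads d (fun k => RtoC (dP k)) W W a b
             <+> dyads d (fun k => RtoC (P k)) U W a b
             <+> dyads d (fun k => RtoC (P k)) W U a b.
Hypothesis Hsld : SLD_eq d (dyads d (fun k => RtoC (P k)) W W) drho lam.

Definition sld_coef (j k : nat) : C := inner d (W j) (mv d lam (W k)).

Lemma hsld_expansion : HSLD_of d (dyads d (fun k => RtoC (P k)) W W) lam =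
  RtoC (sumR d (fun m => P m * sumR d (fun n => Cnorm2 (sld_coef n m)))).
Proof.
  unfold HSLD_of. rewrite trace_dyads, <- sumC_RtoC. apply sumC_ext. intros m Hm.
  rewrite mv_mxmul, hermitian_square_elt by assumption. unfold sld_coef. C_componentwise.
Qed.

Lemma drho_elt_sld j k : (j < d)%nat -> (k < d)%nat ->
  inner d (W j) (mv d drho (W k)) = RtoC ((P j + P k) / 2) <*> sld_coef j k.
Proof.
  intros Hj Hk.
  rewrite (inner_mv_ext d (W j) drho (fun a b => RtoC (/ 2) <*>
     (mxmul d (dyads d (fun k => RtoC (P k)) W W) lam a b
      <+> mxmul d lam (dyads d (fun k => RtoC (P k)) W W) a b)))
    by (intros; apply Hsld; assumption).
  rewrite mv_scal, inner_scal_r, mv_add, inner_add_r, !mv_mxmul, inner_dyads.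
  rewrite (sum_onb_l d W HW (fun m => RtoC (P m)) (fun m => inner d (W m) (mv d lam (W k))))
    by exact Hj.
  rewrite dyads_eigenvector, mv_scal_vec, inner_scal_r by assumption.
  unfold sld_coef. apply C_ext; simpl; field.
Qed.

Lemma anti_hermitian_swap j k : (j < d)%nat -> (k < d)%nat ->
  inner d (W j) (U k) = Copp (inner d (U j) (W k)).
Proof.
  intros Hj Hk.
  transitivity (inner d (U j) (W k) <+> inner d (W j) (U k) <+> Copp (inner d (U j) (W k)));
    [ring|].
  rewrite Hanti by assumption. ring.
Qed.

Lemma drho_elt_derivative j k : (j < d)%nat -> (k < d)%nat ->
  inner d (W j) (mv d drho (W k)) =
  RtoC (kron j k * dP j) <+> RtoC (P j - P k) <*> inner d (U j) (W k).
Proof.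
  intros Hj Hk.
  rewrite (inner_mv_ext d (W j) drho (fun a b =>
     dyads d (fun k => RtoC (dP k)) W W a b <+> dyads d (fun k => RtoC (P k)) U W a b
     <+> dyads d (fun k => RtoC (P k)) W U a b))
    by (intros; apply Hdrho; assumption).
  rewrite !mv_add, !inner_add_r, !inner_dyads.
  rewrite (sum_onb_l d W HW (fun m => RtoC (dP m)) (fun m => inner d (W m) (W k))),
          (sum_onb_r d W HW (fun m => RtoC (P m)) (fun m => inner d (W j) (U m))),
          (sum_onb_l d W HW (fun m => RtoC (P m)) (fun m => inner d (U m) (W k)))
    by assumption.
  rewrite HW, anti_hermitian_swap by assumption. C_componentwise.
Qed.

Lemma sld_coef_identity j k : (j < d)%nat -> (k < d)%nat ->
  RtoC ((P j + P k) / 2) <*> sld_coef j k =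
  RtoC (kron j k * dP j) <+> RtoC (P j - P k) <*> inner d (U j) (W k).
Proof. intros Hj Hk. rewrite <- drho_elt_sld, drho_elt_derivative by assumption. reflexivity. Qed.

Lemma sld_coef_diag m : (m < d)%nat -> P m * P m * Cnorm2 (sld_coef m m) = dP m * dP m.
Proof.
  intros Hm.
  assert (E : RtoC (P m) <*> sld_coef m m = RtoC (dP m)).
  { transitivity (RtoC ((P m + P m) / 2) <*> sld_coef m m); [apply C_ext; simpl; field|].
    rewrite sld_coef_identity by exact Hm. unfold kron.
    destruct (Nat.eq_dec m m) as [_|]; [C_componentwise | congruence]. }
  apply (f_equal Cnorm2) in E. rewrite Cnorm2_mul, !Cnorm2_RtoC in E. exact E.
Qed.

Lemma sld_coef_offdiag j k : (j < d)%nat -> (k < d)%nat -> j <> k ->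
  ((P j + P k) / 2) * ((P j + P k) / 2) * Cnorm2 (sld_coef j k) =
  (P j - P k) * (P j - P k) * Cnorm2 (inner d (U j) (W k)).
Proof.
  intros Hj Hk Hjk.
  assert (E := sld_coef_identity j k Hj Hk). unfold kron in E.
  destruct (Nat.eq_dec j k) as [|_]; [contradiction|].
  replace (RtoC (0 * dP j) <+> RtoC (P j - P k) <*> inner d (U j) (W k))
    with (RtoC (P j - P k) <*> inner d (U j) (W k)) in E by C_componentwise.
  apply (f_equal Cnorm2) in E. rewrite !Cnorm2_mul, !Cnorm2_RtoC in E. exact E.
Qed.

Lemma derivative_overlap_sym j k : (j < d)%nat -> (k < d)%nat ->
  Cnorm2 (inner d (U k) (W j)) = Cnorm2 (inner d (U j) (W k)).
Proof.
  intros Hj Hk. rewrite <- (Cconj_involutive (inner d (U k) (W j))), <- inner_conj.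
  rewrite anti_hermitian_swap by assumption. unfold Cnorm2. simpl. ring.
Qed.

Hypothesis HP : forall k, (k < d)%nat -> 0 <= P k.

Theorem hsld_eq_cl_iff :
  HSLD_of d (dyads d (fun k => RtoC (P k)) W W) lam = RtoC (CL d P dP W U) <->
  (forall j k, (j < d)%nat -> (k < d)%nat -> j <> k ->
     0 < P j -> 0 < P k -> inner d (U j) (W k) = C0).
Proof.
  assert (Hweights := sld_weights_cl_iff d P dP
    (fun j k => Cnorm2 (inner d (U j) (W k))) (fun n m => Cnorm2 (sld_coef n m))
    HP (fun j k _ _ => Cnorm2_nonneg _) derivative_overlap_sym sld_coef_diag sld_coef_offdiag).
  rewrite hsld_expansion. unfold CL. split.
  - intros E j k Hj Hk Hjk Hpj Hpk. apply Cnorm2_eq0.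
    apply (proj1 Hweights); [apply RtoC_inj; exact E | ..]; assumption.
  - intros Horth. f_equal. apply Hweights. intros. apply Cnorm2_eq0, Horth; assumption.
Qed.

End SLDInEigenbasis.

Lemma pure_state_eigenvalues d P W m : ONB d W ->
  pure_state d (dyads d (fun k => RtoC (P k)) W W) -> (m < d)%nat -> P m * P m = P m.
Proof.
  intros HW Hpure Hm.
  assert (E : inner d (W m) (mv d (mxmul d (dyads d (fun k => RtoC (P k)) W W)
                                          (dyads d (fun k => RtoC (P k)) W W)) (W m)) =
              inner d (W m) (mv d (dyads d (fun k => RtoC (P k)) W W) (W m)))
    by (apply inner_mv_ext; intros; apply Hpure; assumption).
  rewrite mv_mxmul, dyads_eigenvector, mv_scal_vec, dyads_eigenvector, !inner_scal_r, HW
    in E by assumption.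
  unfold kron in E. destruct (Nat.eq_dec m m) as [_|]; [|congruence].
  apply (f_equal Re) in E. simpl in E. nra.
Qed.

Lemma idempotent_weights_single d P j k :
  (forall i, (i < d)%nat -> 0 <= P i) -> sumR d P = 1 ->
  (forall i, (i < d)%nat -> P i * P i = P i) ->
  (j < d)%nat -> (k < d)%nat -> j <> k -> 0 < P j -> 0 < P k -> False.
Proof.
  intros HP Hsum Hidem Hj Hk Hjk Hpj Hpk.
  assert (Hone : forall i, (i < d)%nat -> 0 < P i -> P i = 1).
  { intros i Hi Hpi. apply (Rmult_eq_reg_l (P i)); [rewrite Hidem by exact Hi; ring | lra]. }
  assert (Hpair := sumR_ge_pair d P j k HP Hj Hk Hjk).
  rewrite (Hone j), (Hone k) in Hpair by assumption. lra.
Qed.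

Theorem lemma3
  (d : nat) (Iv : R -> Prop) (p : nat -> R -> R) (w : nat -> R -> vec)
  (theta : R) (dp : nat -> R) (dw : nat -> vec) (drho : mat) (lam : mat) :
  is_open_interval Iv ->
  (* p_k : I -> [0,1] smooth, summing to 1 *)
  (forall k, (k < d)%nat -> smooth_on Iv (p k)) ->
  (forall k t, (k < d)%nat -> Iv t -> 0 <= p k t <= 1) ->
  (forall t, Iv t -> sumR d (fun k => p k t) = 1) ->
  (* w_1(t), ..., w_d(t) orthonormal basis of C^d, smooth in t *)
  (forall k i, (k < d)%nat -> (i < d)%nat -> smoothC_on Iv (fun t => w k t i)) ->
  (forall t j k, Iv t -> (j < d)%nat -> (k < d)%nat ->
       inner d (w j t) (w k t) = RtoC (if Nat.eq_dec j k then 1 else 0)) ->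
  Iv theta ->
  (* dp, dw, drho are the theta-derivatives at theta *)
  (forall k, (k < d)%nat -> derivable_pt_lim (p k) theta (dp k)) ->
  (forall k i, (k < d)%nat -> (i < d)%nat ->
       derivableC_lim (fun t => w k t i) theta (dw k i)) ->
  (forall i j, (i < d)%nat -> (j < d)%nat ->
       derivableC_lim (fun t => rho d p w t i j) theta (drho i j)) ->
  (* lam is a Hermitian solution of the SLD equation at theta *)
  hermitian d lam ->
  SLD_eq d (rho d p w theta) drho lam ->
  (HSLD_of d (rho d p w theta) lam
     = RtoC (CL d (fun k => p k theta) dp (fun k => w k theta) dw)
   <->
   (forall j k, (j < d)%nat -> (k < d)%nat -> j <> k ->
      0 < p j theta -> 0 < p k theta -> inner d (dw j) (w k theta) = C0))
  /\
  (pure_state d (rho d p w theta) ->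
   HSLD_of d (rho d p w theta) lam
     = RtoC (CL d (fun k => p k theta) dp (fun k => w k theta) dw)).
Proof.
  intros HI _ Hp01 Hsum _ Hon Hth Hdp Hdw Hdrho Hherm Hsld.
  set (P := fun k => p k theta). set (W := fun k => w k theta).
  assert (HW : ONB d W) by (intros j k Hj Hk; apply Hon; assumption).
  assert (Hanti : forall j k, (j < d)%nat -> (k < d)%nat ->
      inner d (dw j) (W k) <+> inner d (W j) (dw k) = C0).
  { intros j k Hj Hk. apply (orthonormal_derivative d Iv w theta dw); try assumption.
    intros t Ht j' k' Hj' Hk'. apply Hon; assumption. }
  assert (Hdrho' : forall a b, (a < d)%nat -> (b < d)%nat ->
      drho a b = dyads d (fun k => RtoC (dp k)) W W a b
                 <+> dyads d (fun k => RtoC (P k)) dw W a b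
                 <+> dyads d (fun k => RtoC (P k)) W dw a b).
  { intros a b Ha Hb. apply (dC_unique (fun t => rho d p w t a b) theta);
      [apply Hdrho | apply rho_derivative]; assumption. }
  assert (HP : forall k, (k < d)%nat -> 0 <= P k) by (intros; apply Hp01; assumption).
  change (rho d p w theta) with (dyads d (fun k => RtoC (P k)) W W) in *.
  assert (Hiff := hsld_eq_cl_iff d P dp W dw lam drho HW Hherm Hanti Hdrho' Hsld HP).
  split; [exact Hiff|].
  intros Hpure. apply Hiff. intros j k Hj Hk Hjk Hpj Hpk. exfalso.
  apply (idempotent_weights_single d P j k HP (Hsum theta Hth)); try assumption.
  intros i Hi. apply (pure_state_eigenvalues d P W i HW Hpure Hi).
Qed.
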